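(* Let $m>2$ and $\beta\in(0,1)$. (a) There exist $b>0$ and $\chi\in C^\infty((-\infty,b))$ with $\chi(s)=0$ for all $s\le0$ and $\chi(s)\to+\infty$ as $s\to b^-$, such that $$\frac{m-2}{m}\left(\frac{\chi''(s)}{\left[(1+\chi'(s))^m-(1+\chi'(s))\right]^{2/m}}\right)^{\frac{m}{m-2}}\le(\chi'(s))^\beta\quad\text{for all }s\in(0,b).$$ (b) There exists $\xi\in C^\infty(\mathbb{R})$ with $\xi(s)=s$ for all $s\le0$ and $\xi(s)$ increasing to some limit $M>0$ as $s\to+\infty$, such that $$\frac{m-2}{m}\left(\frac{-\xi''(s)}{\left[\xi'(s)-(\xi'(s))^m\right]^{2/m}}\right)^{\frac{m}{m-2}}\le(1-\xi'(s))^\beta\quad\text{for all }s\in(0,+\infty).$$ *)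

From Stdlib Require Import Reals.
From Coquelicot Require Import Coquelicot.
Open Scope R_scope.

(* Real power x^y for a nonnegative base x and real exponent y > 0:
   0^y = 0 and x^y = exp (y ln x) for x > 0.  (Only ever applied to bases
   which the statement separately requires to be >= 0.) *)
Definition rpow (x y : R) : R := if Rle_dec x 0 then 0 else Rpower x y.

Definition smooth_on (f : R -> R) (U : R -> Prop) : Prop :=
  forall (n : nat) (x : R), U x -> ex_derive_n f n x.

(* Both functions are built from the flat function s |-> exp (- T / s) (extended by 0 on
   s <= 0), which is smooth on R because every derivative of s |-> P (1/s) exp (- 1/s), P a
   polynomial, is again of this form and is O(s^2) at 0+.  For (a) take
   chi s = -2 ln (1 - exp (2 - T / s)) on (-oo, T/2); for (b) take
   xi s = s / (1 + s exp (- T / s) / (2 T)), which increases to 2 T.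
   Put gam = beta (m - 2) / m + 2 / m < 1.  Since (1 + p)^m - (1 + p) >= p (1 + p)^(m-1) and
   r - r^m >= r (1 - r), the two inequalities follow from chi'' <= chi'^gam + chi'^2 and
   -xi'' <= xi' (1 - xi')^gam.  In the variable y = T / s these become explicit
   inequalities in which exp (- y) beats every power of y, provided T is a large multiple
   of (1 - gam)^(-4), resp. (1 - gam)^(-2). *)

From Stdlib Require Import Reals Lra Lia.
From Coquelicot Require Import Coquelicot.
Open Scope R_scope.

(** * Smoothness on open sets *)

Definition Ck_on (n : nat) (f : R -> R) (U : R -> Prop) : Prop :=
  forall k x, (k <= n)%nat -> U x -> ex_derive_n f k x.

Lemma smooth_on_Ck f U : (forall n, Ck_on n f U) -> smooth_on f U.
Proof. intros H n x Ux. exact (H n n x (le_n n) Ux). Qed.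

Lemma Ck_on_0 f U : Ck_on 0 f U.
Proof. intros k x Hk _. replace k with 0%nat by lia. exact I. Qed.

Lemma Ck_on_S n f U :
  Ck_on (S n) f U <-> (forall x, U x -> ex_derive f x) /\ Ck_on n (Derive f) U.
Proof.
  assert (E : forall k y, Derive_n f (S k) y = Derive_n (Derive f) k y).
  { intros k y. rewrite <- Nat.add_1_r, <- Derive_n_comp. reflexivity. }
  split.
  - intros H. split; [intros x Ux; exact (H 1%nat x ltac:(lia) Ux)|].
    intros [|k] x Hk Ux; [exact I|].
    apply (ex_derive_ext (Derive_n f (S k))); [apply E|].
    exact (H (S (S k)) x ltac:(lia) Ux).
  - intros [H1 H2] [|[|k]] x Hk Ux; [exact I | exact (H1 x Ux) |].
    apply (ex_derive_ext (Derive_n (Derive f) k)); [intros; symmetry; apply E|].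
    exact (H2 (S k) x ltac:(lia) Ux).
Qed.

Lemma Ck_on_le m n f U : (m <= n)%nat -> Ck_on n f U -> Ck_on m f U.
Proof. intros Hmn H k x Hk Ux. apply H; [lia | exact Ux]. Qed.

Lemma Ck_on_subset n f (U V : R -> Prop) :
  (forall x, V x -> U x) -> Ck_on n f U -> Ck_on n f V.
Proof. intros HVU H k x Hk Vx. exact (H k x Hk (HVU x Vx)). Qed.

Section OpenDomain.

Variable U : R -> Prop.
Hypothesis U_open : open U.

Lemma Ck_on_ext n f g : (forall x, U x -> f x = g x) -> Ck_on n f U -> Ck_on n g U.
Proof.
  intros Hfg H k x Hk Ux. apply (ex_derive_n_ext_loc f); [|exact (H k x Hk Ux)].
  exact (locally_open U _ U_open Hfg x Ux).
Qed.

Lemma Ck_on_const n c : Ck_on n (fun _ => c) U.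
Proof. intros k x _ _. apply ex_derive_n_const. Qed.

Lemma Ck_on_id n : Ck_on n (fun x => x) U.
Proof.
  intros k x _ _. apply (ex_derive_n_ext (fun x => x ^ 1)); [intros; ring|].
  apply ex_derive_n_pow.
Qed.

Lemma Ck_on_opp n f : Ck_on n f U -> Ck_on n (fun x => - f x) U.
Proof. intros H k x Hk Ux. apply ex_derive_n_opp, H; assumption. Qed.

Lemma Ck_on_plus n f g :
  Ck_on n f U -> Ck_on n g U -> Ck_on n (fun x => f x + g x) U.
Proof.
  intros Hf Hg k x Hk Ux.
  apply (ex_derive_n_plus f g k x);
    apply (locally_open U _ U_open); try exact Ux; intros y Uy j Hj;
    [apply Hf | apply Hg]; (lia || exact Uy).
Qed.

Lemma Ck_on_mult n f g :
  Ck_on n f U -> Ck_on n g U -> Ck_on n (fun x => f x * g x) U.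
Proof.
  revert f g; induction n as [|n IH]; intros f g Hf Hg; [apply Ck_on_0|].
  pose proof (proj1 (Ck_on_S n f U) Hf) as [f1 f2].
  pose proof (proj1 (Ck_on_S n g U) Hg) as [g1 g2].
  apply Ck_on_S; split; [intros x Ux; apply ex_derive_mult; auto|].
  apply (Ck_on_ext n (fun x => Derive f x * g x + f x * Derive g x)).
  - intros x Ux. rewrite Derive_mult; auto.
  - apply Ck_on_plus; apply IH; auto; apply (Ck_on_le n (S n)); auto.
Qed.

Lemma Ck_on_comp n f g V : open V -> (forall x, U x -> V (g x)) ->
  Ck_on n f V -> Ck_on n g U -> Ck_on n (fun x => f (g x)) U.
Proof.
  intros V_open HgV. revert f; induction n as [|n IH]; intros f Hf Hg; [apply Ck_on_0|].
  pose proof (proj1 (Ck_on_S n f V) Hf) as [f1 f2].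
  pose proof (proj1 (Ck_on_S n g U) Hg) as [g1 g2].
  apply Ck_on_S; split; [intros x Ux; apply ex_derive_comp; auto|].
  apply (Ck_on_ext n (fun x => Derive g x * Derive f (g x))).
  - intros x Ux. rewrite (Derive_comp f g); auto.
  - apply Ck_on_mult; auto. apply IH; auto. apply (Ck_on_le n (S n)); auto.
Qed.

End OpenDomain.

Lemma Ck_on_inv n : Ck_on n Rinv (fun x => 0 < x).
Proof.
  induction n as [|n IH]; [apply Ck_on_0|].
  assert (D : forall x, 0 < x -> is_derive Rinv x (- (/ x * / x))).
  { intros x Hx. auto_derive; [lra | field; lra]. }
  apply Ck_on_S; split; [intros x Hx; eexists; exact (D x Hx)|].
  apply (Ck_on_ext _ (open_gt 0) n (fun x => - (/ x * / x))).
  - intros x Hx. symmetry. apply is_derive_unique, D, Hx.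
  - apply Ck_on_opp, Ck_on_mult; [apply open_gt | exact IH | exact IH].
Qed.

Lemma Ck_on_ln n : Ck_on n ln (fun x => 0 < x).
Proof.
  destruct n as [|n]; [apply Ck_on_0|].
  apply Ck_on_S; split; [intros x Hx; eexists; apply is_derive_ln, Hx|].
  apply (Ck_on_ext _ (open_gt 0) n Rinv); [|apply Ck_on_inv].
  intros x Hx. symmetry. apply is_derive_unique, is_derive_ln, Hx.
Qed.

Lemma Derive_Derive_n_2_loc (f g g1 g2 : R -> R) (U : R -> Prop) s :
  open U -> U s -> (forall x, U x -> f x = g x) ->
  (forall x, U x -> is_derive g x (g1 x)) -> (forall x, U x -> is_derive g1 x (g2 x)) ->
  Derive f s = g1 s /\ Derive_n f 2 s = g2 s.
Proof.
  intros HU Us Hfg D1 D2.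
  assert (HD1 : forall x, U x -> Derive f x = g1 x).
  { intros x Ux. rewrite (Derive_ext_loc f g); [apply is_derive_unique, D1, Ux|].
    exact (locally_open U _ HU Hfg x Ux). }
  split; [exact (HD1 s Us)|].
  change (Derive (Derive f) s = g2 s).
  rewrite (Derive_ext_loc (Derive f) g1); [apply is_derive_unique, D2, Us|].
  exact (locally_open U _ HU HD1 s Us).
Qed.

(** * Flat functions *)

Lemma exp_INR_mult k w : exp (INR k * w) = exp w ^ k.
Proof.
  induction k as [|k IH]; [rewrite Rmult_0_l; apply exp_0|].
  rewrite S_INR, Rmult_plus_distr_r, Rmult_1_l, exp_plus, IH. simpl. ring.
Qed.

(* z^k = (k * (z/k))^k and 1 + z/k <= e^(z/k). *)
Lemma pow_le_exp z k : 0 <= z -> z ^ k <= INR k ^ k * exp z.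
Proof.
  intros Hz. destruct k as [|k]; [simpl; pose proof (exp_ineq1_le z); lra|].
  set (K := INR (S k)). assert (HK : 0 < K) by (apply lt_0_INR; lia).
  replace (exp z) with (exp (z / K) ^ S k)
    by (rewrite <- exp_INR_mult; f_equal; unfold K; field; fold K; lra).
  replace (z ^ S k) with (K ^ S k * (z / K) ^ S k)
    by (rewrite <- Rpow_mult_distr; f_equal; field; lra).
  apply Rmult_le_compat_l; [apply pow_le; lra|].
  apply pow_incr. pose proof (exp_ineq1_le (z / K)).
  split; [apply Rdiv_le_0_compat|]; lra.
Qed.

Lemma exp_neg_le_inv_pow z k : 0 < z -> exp (- z) <= INR k ^ k / z ^ k.
Proof.
  intros Hz. pose proof (pow_le_exp z k ltac:(lra)) as H.
  pose proof (exp_pos z). pose proof (pow_lt z k Hz).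
  rewrite exp_Ropp. apply Rmult_le_reg_r with (exp z * z ^ k); [nra|].
  field_simplify; lra.
Qed.

Inductive is_poly : (R -> R) -> Prop :=
| is_poly_const c : is_poly (fun _ => c)
| is_poly_id : is_poly (fun y => y)
| is_poly_plus P Q : is_poly P -> is_poly Q -> is_poly (fun y => P y + Q y)
| is_poly_mult P Q : is_poly P -> is_poly Q -> is_poly (fun y => P y * Q y).

Lemma is_poly_derive P :
  is_poly P -> exists P', is_poly P' /\ forall y, is_derive P y (P' y).
Proof.
  induction 1 as [c| |P Q _ [P' [HP' DP]] _ [Q' [HQ' DQ]]|P Q HP [P' [HP' DP]] HQ [Q' [HQ' DQ]]].
  - exists (fun _ => 0); split; [apply is_poly_const|].
    intros; apply is_derive_Reals, derivable_pt_lim_const.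
  - exists (fun _ => 1); split; [apply is_poly_const|].
    intros; apply is_derive_Reals, derivable_pt_lim_id.
  - exists (fun y => P' y + Q' y); split; [apply is_poly_plus; auto|].
    intros y; apply (is_derive_plus P Q); auto.
  - exists (fun y => P' y * Q y + P y * Q' y).
    split; [apply is_poly_plus; apply is_poly_mult; auto|].
    intros y. apply (is_derive_mult P Q); auto. intros; apply Rmult_comm.
Qed.

Lemma is_poly_bound P : is_poly P ->
  exists A N, 0 <= A /\ forall y, 0 <= y -> Rabs (P y) <= A * (1 + y) ^ N.
Proof.
  induction 1 as [c| |P Q _ [A1 [N1 [HA1 H1]]] _ [A2 [N2 [HA2 H2]]]
                     |P Q _ [A1 [N1 [HA1 H1]]] _ [A2 [N2 [HA2 H2]]]].
  - exists (Rabs c), 0%nat. split; [apply Rabs_pos | intros; simpl; lra].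
  - exists 1, 1%nat. split; [lra | intros; simpl; rewrite Rabs_pos_eq; lra].
  - exists (A1 + A2), (N1 + N2)%nat. split; [lra|]. intros y Hy.
    assert (E1 : (1 + y) ^ N1 <= (1 + y) ^ (N1 + N2)) by (apply Rle_pow; [lra|lia]).
    assert (E2 : (1 + y) ^ N2 <= (1 + y) ^ (N1 + N2)) by (apply Rle_pow; [lra|lia]).
    specialize (H1 y Hy); specialize (H2 y Hy). pose proof (Rabs_triang (P y) (Q y)).
    pose proof (Rmult_le_compat_l A1 _ _ HA1 E1). pose proof (Rmult_le_compat_l A2 _ _ HA2 E2).
    nra.
  - exists (A1 * A2), (N1 + N2)%nat. split; [nra|]. intros y Hy.
    rewrite Rabs_mult, pow_add.
    replace (A1 * A2 * ((1 + y) ^ N1 * (1 + y) ^ N2))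
      with ((A1 * (1 + y) ^ N1) * (A2 * (1 + y) ^ N2)) by ring.
    apply Rmult_le_compat; auto; apply Rabs_pos.
Qed.

Lemma is_poly_mul_exp_bounded P : is_poly P ->
  exists C, forall y, 0 <= y -> Rabs (P y) * exp (- y) <= C.
Proof.
  intros HP. destruct (is_poly_bound P HP) as [A [N [HA HB]]].
  exists (A * (INR N ^ N * exp 1)). intros y Hy.
  pose proof (pow_le_exp (1 + y) N ltac:(lra)) as Hpow.
  rewrite exp_plus in Hpow.
  assert (Hey : exp y * exp (- y) = 1) by (rewrite <- exp_plus, Rplus_opp_r; apply exp_0).
  pose proof (exp_pos (- y)). specialize (HB y Hy).
  apply Rle_trans with (A * (1 + y) ^ N * exp (- y)); [apply Rmult_le_compat_r; lra|].
  rewrite Rmult_assoc. apply Rmult_le_compat_l; [exact HA|].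
  apply Rle_trans with (INR N ^ N * (exp 1 * exp y) * exp (- y)); [apply Rmult_le_compat_r; lra|].
  right. rewrite !Rmult_assoc, Hey. ring.
Qed.

Lemma is_derive_0_of_sq_bound f C :
  f 0 = 0 -> (forall h, Rabs (f h) <= C * h ^ 2) -> is_derive f 0 0.
Proof.
  intros Hf0 Hf. assert (HC : 0 <= C) by (specialize (Hf 1); pose proof (Rabs_pos (f 1)); lra).
  apply is_derive_Reals. intros eps Heps.
  assert (Hd : 0 < eps / (C + 1)) by (apply Rdiv_lt_0_compat; lra).
  exists (mkposreal _ Hd). intros h Hh0 Hh. simpl in Hh.
  rewrite Rplus_0_l, Hf0, Rminus_0_r, Rminus_0_r.
  assert (E : Rabs (f h / h) = Rabs (f h) / Rabs h)
    by (unfold Rdiv; rewrite Rabs_mult, Rabs_inv; reflexivity).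
  rewrite E. pose proof (Rabs_pos_lt h Hh0) as Hah.
  apply Rmult_lt_reg_r with (Rabs h); [exact Hah|].
  unfold Rdiv. rewrite Rmult_assoc, Rinv_l, Rmult_1_r by lra.
  eapply Rle_lt_trans; [apply Hf|].
  replace (C * h ^ 2) with (C * Rabs h * Rabs h)
    by (rewrite Rmult_assoc, <- Rabs_mult, Rabs_pos_eq by nra; ring).
  apply Rmult_lt_compat_r; [exact Hah|].
  apply Rle_lt_trans with (C * (eps / (C + 1))); [apply Rmult_le_compat_l; lra|].
  assert (Hq : C / (C + 1) < 1).
  { apply Rmult_lt_reg_r with (C + 1); [lra|].
    unfold Rdiv. rewrite Rmult_assoc, Rinv_l; lra. }
  replace (C * (eps / (C + 1))) with (eps * (C / (C + 1))) by (field; lra). nra.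
Qed.

Definition flat_fun (P : R -> R) (s : R) : R :=
  if Rle_dec s 0 then 0 else P (/ s) * exp (- / s).

Lemma flat_fun_sq_bound P : is_poly P -> exists C, forall h, Rabs (flat_fun P h) <= C * h ^ 2.
Proof.
  intros HP. destruct (is_poly_mul_exp_bounded (fun y => P y * (y * y)))
    as [C HC]; [repeat constructor; auto|].
  exists C. intros h. unfold flat_fun. destruct (Rle_dec h 0) as [Hh|Hh].
  - specialize (HC 0 (Rle_refl 0)). pose proof (Rabs_pos (P 0 * (0 * 0))).
    pose proof (exp_pos (- 0)). rewrite Rabs_R0. assert (0 <= C) by nra. nra.
  - assert (Hy : 0 < / h) by (apply Rinv_0_lt_compat; lra).
    specialize (HC (/ h) ltac:(lra)).
    rewrite Rabs_mult, (Rabs_pos_eq (_ * _)) in HC by nra.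
    rewrite Rabs_mult, (Rabs_pos_eq (exp _)) by (left; apply exp_pos).
    apply Rmult_le_reg_r with (/ h * / h); [nra|].
    replace (C * h ^ 2 * (/ h * / h)) with C by (field; lra). lra.
Qed.

Lemma flat_fun_derive P : is_poly P ->
  exists Q, is_poly Q /\ forall s, is_derive (flat_fun P) s (flat_fun Q s).
Proof.
  intros HP. destruct (is_poly_derive P HP) as [P' [HP' DP]].
  exists (fun y => (P y + -1 * P' y) * (y * y)). split; [repeat constructor; auto|].
  intros s. destruct (Rtotal_order s 0) as [Hs|[Hs|Hs]].
  - unfold flat_fun at 2. destruct (Rle_dec s 0); [|lra].
    apply (is_derive_ext_loc (fun _ => 0)); [|apply is_derive_Reals, derivable_pt_lim_const].
    apply (locally_open (fun y => y < 0)); [apply open_lt| |exact Hs].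
    intros y Hy. unfold flat_fun. destruct (Rle_dec y 0); [reflexivity | lra].
  - subst s. unfold flat_fun at 2. destruct (Rle_dec 0 0) as [_|]; [|lra].
    destruct (flat_fun_sq_bound P HP) as [C HC].
    apply (is_derive_0_of_sq_bound _ C); [|exact HC].
    unfold flat_fun. destruct (Rle_dec 0 0); [reflexivity | lra].
  - unfold flat_fun at 2. destruct (Rle_dec s 0); [lra|].
    apply (is_derive_ext_loc (fun t => P (/ t) * exp (- / t))).
    + apply (locally_open (fun y => 0 < y)); [apply open_gt| |exact Hs].
      intros y Hy. unfold flat_fun. destruct (Rle_dec y 0); [lra | reflexivity].
    + assert (D1 : is_derive (fun t => P (/ t)) s (- (/ s * / s) * P' (/ s))).
      { apply (is_derive_comp P Rinv); [apply DP|]. auto_derive; [lra | field; lra]. }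
      assert (D2 : is_derive (fun t => exp (- / t)) s ((/ s * / s) * exp (- / s))).
      { auto_derive; [lra | field; lra]. }
      replace ((P (/ s) + -1 * P' (/ s)) * (/ s * / s) * exp (- / s)) with
        ((- (/ s * / s) * P' (/ s)) * exp (- / s) + P (/ s) * ((/ s * / s) * exp (- / s)))
        by ring.
      apply (is_derive_mult (fun t => P (/ t)) (fun t => exp (- / t))); auto.
      intros; apply Rmult_comm.
Qed.

Lemma flat_fun_Ck n P : is_poly P -> Ck_on n (flat_fun P) (fun _ => True).
Proof.
  revert P; induction n as [|n IH]; intros P HP; [apply Ck_on_0|].
  destruct (flat_fun_derive P HP) as [Q [HQ DQ]].
  apply Ck_on_S; split; [intros x _; eexists; apply DQ|].
  apply (Ck_on_ext _ open_true n (flat_fun Q)); [|apply IH, HQ].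
  intros x _. symmetry. apply is_derive_unique, DQ.
Qed.

Definition flat_exp (T s : R) : R := if Rle_dec s 0 then 0 else exp (- (T / s)).

Lemma flat_exp_pos T s : 0 < s -> flat_exp T s = exp (- (T / s)).
Proof. intros Hs. unfold flat_exp. destruct (Rle_dec s 0); [lra | reflexivity]. Qed.

Lemma flat_exp_nonpos T s : s <= 0 -> flat_exp T s = 0.
Proof. intros Hs. unfold flat_exp. destruct (Rle_dec s 0); [reflexivity | lra]. Qed.

Lemma flat_exp_ge0 T s : 0 <= flat_exp T s.
Proof. unfold flat_exp. destruct (Rle_dec s 0); [lra | left; apply exp_pos]. Qed.

Lemma flat_exp_Ck T n : 0 < T -> Ck_on n (flat_exp T) (fun _ => True).
Proof.
  intros HT. apply (Ck_on_ext _ open_true n (fun s => flat_fun (fun _ => 1) (/ T * s))).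
  - intros s _. assert (HTi : 0 < / T) by (apply Rinv_0_lt_compat, HT).
    unfold flat_fun, flat_exp. destruct (Rle_dec s 0), (Rle_dec (/ T * s) 0); try (exfalso; nra).
    + reflexivity.
    + rewrite Rmult_1_l. do 2 f_equal. field. lra.
  - apply (Ck_on_comp _ open_true n _ _ (fun _ => True) open_true); [easy | |].
    + apply flat_fun_Ck, is_poly_const.
    + apply Ck_on_mult; [apply open_true | apply Ck_on_const | apply Ck_on_id].
Qed.

(** * Power inequalities *)

Lemma INR_ge3 m : (2 < m)%nat -> 3 <= INR m.
Proof. intros H. replace 3 with (INR 3) by (simpl; ring). apply le_INR; lia. Qed.

Lemma exp_le_compat x y : x <= y -> exp x <= exp y.
Proof. intros [H|<-]; [left; apply exp_increasing, H | right; reflexivity]. Qed.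

Lemma Rpower_pos x e : 0 < Rpower x e.
Proof. apply exp_pos. Qed.

Lemma Rle_Rpower_base_le1 x a b : 0 < x <= 1 -> a <= b -> Rpower x b <= Rpower x a.
Proof.
  intros Hx Hab. unfold Rpower. apply exp_le_compat.
  assert (ln x <= 0) by (rewrite <- ln_1; apply ln_le; lra). nra.
Qed.

Lemma Rpower_le_1_plus x d : 0 < x -> 0 <= d <= 1 -> Rpower x d <= 1 + x.
Proof.
  intros Hx Hd. destruct (Rle_dec x 1).
  - pose proof (Rle_Rpower_base_le1 x 0 d ltac:(lra) ltac:(lra)). rewrite Rpower_O in H; lra.
  - pose proof (Rle_Rpower x d 1 ltac:(lra) ltac:(lra)). rewrite Rpower_1 in H; lra.
Qed.

Lemma rpow_pos_eq x e : 0 < x -> rpow x e = Rpower x e.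
Proof. intros Hx. unfold rpow. destruct (Rle_dec x 0); [lra | reflexivity]. Qed.

Lemma rpow_quotient_bound M beta num D B :
  2 < M -> 0 < D -> 0 < B -> 0 <= num ->
  num <= Rpower B (beta * (M - 2) / M) * Rpower D (2 / M) ->
  (M - 2) / M * rpow (num / rpow D (2 / M)) (M / (M - 2)) <= rpow B beta.
Proof.
  intros HM HD HB Hn Hle.
  rewrite (rpow_pos_eq D), (rpow_pos_eq B) by assumption.
  pose proof (Rpower_pos B beta) as HBb. pose proof (Rpower_pos D (2 / M)) as HDa.
  assert (HM1 : 0 <= (M - 2) / M <= 1).
  { split; [apply Rdiv_le_0_compat; lra|].
    apply Rmult_le_reg_r with M; [lra|]. unfold Rdiv. rewrite Rmult_assoc, Rinv_l; lra. }
  destruct Hn as [Hn|Hn].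
  2: { subst num. unfold Rdiv at 2. rewrite Rmult_0_l. unfold rpow.
       destruct (Rle_dec 0 0); [|lra]. lra. }
  assert (HX : 0 < num / Rpower D (2 / M)) by (apply Rdiv_lt_0_compat; assumption).
  rewrite rpow_pos_eq by exact HX.
  assert (H1 : num / Rpower D (2 / M) <= Rpower B (beta * (M - 2) / M)).
  { apply Rmult_le_reg_r with (Rpower D (2 / M)); [exact HDa|].
    unfold Rdiv. rewrite Rmult_assoc, Rinv_l, Rmult_1_r; lra. }
  assert (H2 : Rpower (num / Rpower D (2 / M)) (M / (M - 2)) <= Rpower B beta).
  { replace beta with (beta * (M - 2) / M * (M / (M - 2))) by (field; lra).
    rewrite <- Rpower_mult. apply Rle_Rpower_l; [apply Rlt_le, Rdiv_lt_0_compat; lra|].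
    split; assumption. }
  pose proof (Rpower_pos (num / Rpower D (2 / M)) (M / (M - 2))). nra.
Qed.

Definition gam (m : nat) (beta : R) : R := beta * (INR m - 2) / INR m + 2 / INR m.

Lemma gam_bounds m beta : (2 < m)%nat -> 0 < beta < 1 -> 2 / INR m <= gam m beta < 1.
Proof.
  intros Hm Hb. pose proof (INR_ge3 m Hm). unfold gam.
  assert (0 <= beta * (INR m - 2) / INR m) by (apply Rdiv_le_0_compat; nra).
  assert (0 < (1 - beta) * (INR m - 2) / INR m) by (apply Rdiv_lt_0_compat; nra).
  assert (1 = beta * (INR m - 2) / INR m + 2 / INR m + (1 - beta) * (INR m - 2) / INR m)
    by (field; lra).
  lra.
Qed.

Lemma gam_gap m beta : (2 < m)%nat -> 0 < beta < 1 -> 0 < 1 - gam m beta <= 1.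
Proof.
  intros Hm Hb. pose proof (gam_bounds m beta Hm Hb). pose proof (INR_ge3 m Hm).
  assert (0 < 2 / INR m) by (apply Rdiv_lt_0_compat; lra). lra.
Qed.

(* For p > 1 use (1 + p)^c >= (1 + p) p^(c - 1) and a + c = 2. *)
Lemma Rpower_add_sq_le p a g c : 0 < p -> 0 <= a <= g -> g <= 1 -> 1 <= c -> a + c = 2 ->
  Rpower p g + p ^ 2 <= Rpower p g * Rpower (1 + p) c.
Proof.
  intros Hp Hag Hg1 Hc Hac.
  pose proof (Rpower_pos p g) as Hpg.
  destruct (Rle_dec p 1).
  - pose proof (Rle_Rpower (1 + p) 1 c ltac:(lra) Hc) as E1. rewrite Rpower_1 in E1 by lra.
    pose proof (Rle_Rpower_base_le1 p g 1 ltac:(lra) Hg1) as E2. rewrite Rpower_1 in E2 by lra.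
    pose proof (Rmult_le_compat_l _ _ _ (Rlt_le _ _ Hpg) E1). simpl. nra.
  - pose proof (Rle_Rpower p a g ltac:(lra) ltac:(lra)) as E1.
    pose proof (Rle_Rpower p g 1 ltac:(lra) Hg1) as E2. rewrite Rpower_1 in E2 by lra.
    assert (E3 : Rpower (1 + p) c = (1 + p) * Rpower (1 + p) (c - 1)).
    { rewrite <- (Rpower_1 (1 + p)) at 2 by lra. rewrite <- Rpower_plus. f_equal; ring. }
    assert (E4 : Rpower p (c - 1) <= Rpower (1 + p) (c - 1)) by (apply Rle_Rpower_l; lra).
    assert (E5 : Rpower p a * Rpower p (c - 1) = p).
    { rewrite <- Rpower_plus. replace (a + (c - 1)) with 1 by lra. apply Rpower_1; lra. }
    pose proof (Rpower_pos p a). pose proof (Rpower_pos p (c - 1)).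
    set (X := Rpower (1 + p) (c - 1)) in *.
    assert (F1 : Rpower p a * ((1 + p) * X) <= Rpower p g * ((1 + p) * X))
      by (apply Rmult_le_compat_r; nra).
    assert (F2 : p <= Rpower p a * X) by (rewrite <- E5 at 1; apply Rmult_le_compat_l; lra).
    rewrite E3. simpl. nra.
Qed.

Lemma chi_condition m beta p q : (2 < m)%nat -> 0 < beta < 1 -> 0 < p -> 0 <= q ->
  q <= Rpower p (gam m beta) + p ^ 2 ->
  (INR m - 2) / INR m *
    rpow (q / rpow ((1 + p) ^ m - (1 + p)) (2 / INR m)) (INR m / (INR m - 2))
  <= rpow p beta.
Proof.
  intros Hm Hb Hp Hq Hle.
  pose proof (INR_ge3 m Hm) as HM. pose proof (gam_bounds m beta Hm Hb) as Hg.
  destruct m as [|m']; [lia|]. rewrite S_INR in *.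
  set (M := INR m' + 1) in *. set (a := 2 / M). set (c := INR m' * a).
  assert (Hpm : 1 + p <= (1 + p) ^ m')
    by (rewrite <- (pow_1 (1 + p)) at 1; apply Rle_pow; [lra | lia]).
  assert (HD : p * (1 + p) ^ m' <= (1 + p) ^ S m' - (1 + p)) by (simpl; nra).
  assert (HDp : 0 < p * (1 + p) ^ m') by (apply Rmult_lt_0_compat; [lra | apply pow_lt; lra]).
  assert (Ha : 0 <= a) by (unfold a; apply Rdiv_le_0_compat; lra).
  assert (Hc : 1 <= c).
  { unfold c, a. apply Rmult_le_reg_r with M; [lra|].
    replace (INR m' * (2 / M) * M) with (2 * INR m') by (field; lra). unfold M in *; lra. }
  assert (Hac : a + c = 2) by (unfold c, a; unfold M in *; field; lra).
  change (2 / M) with a in Hg |- *. apply rpow_quotient_bound; try lra.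
  assert (R1 : Rpower p a * Rpower (1 + p) c <= Rpower ((1 + p) ^ S m' - (1 + p)) a).
  { unfold c. rewrite <- Rpower_mult, Rpower_pow, Rpower_mult_distr by lra.
    apply Rle_Rpower_l; lra. }
  pose proof (Rpower_add_sq_le p a (gam (S m') beta) c Hp ltac:(lra) ltac:(lra) Hc Hac).
  pose proof (Rpower_pos p (beta * (M - 2) / M)).
  replace (gam (S m') beta) with (beta * (M - 2) / M + a) in *
    by (unfold gam, a, M; rewrite S_INR; reflexivity).
  rewrite Rpower_plus in *. change (2 / M) with a.
  pose proof (Rmult_le_compat_l _ _ _ (Rlt_le _ _ H0) R1). nra.
Qed.

Lemma xi_condition m beta r x2 : (2 < m)%nat -> 0 < beta < 1 -> 0 < r < 1 -> x2 <= 0 ->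
  - x2 <= r * Rpower (1 - r) (gam m beta) ->
  (INR m - 2) / INR m *
    rpow (- x2 / rpow (r - r ^ m) (2 / INR m)) (INR m / (INR m - 2))
  <= rpow (1 - r) beta.
Proof.
  intros Hm Hb Hr Hx Hle.
  pose proof (INR_ge3 m Hm) as HM. pose proof (gam_bounds m beta Hm Hb) as Hg.
  set (M := INR m) in *. set (a := 2 / M).
  destruct m as [|[|k]]; try lia.
  assert (Hk : r ^ k <= 1) by (rewrite <- (pow1 k); apply pow_incr; lra).
  assert (HD : r * (1 - r) <= r - r ^ S (S k)) by (simpl; nra).
  assert (Ha : 0 <= a <= 1).
  { unfold a. split; [apply Rdiv_le_0_compat; lra|].
    apply Rmult_le_reg_r with M; [lra|]. unfold Rdiv. rewrite Rmult_assoc, Rinv_l; lra. }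
  apply rpow_quotient_bound; try lra; [nra|].
  assert (R1 : r * Rpower (1 - r) a <= Rpower (r - r ^ S (S k)) a).
  { pose proof (Rle_Rpower_base_le1 r a 1 ltac:(lra) ltac:(lra)) as R0.
    rewrite Rpower_1 in R0 by lra.
    pose proof (Rpower_pos (1 - r) a).
    apply Rle_trans with (Rpower (r * (1 - r)) a); [|apply Rle_Rpower_l; nra].
    rewrite <- Rpower_mult_distr by lra. nra. }
  pose proof (Rpower_pos (1 - r) (beta * (M - 2) / M)).
  replace (gam (S (S k)) beta) with (beta * (M - 2) / M + a) in Hle by reflexivity.
  rewrite Rpower_plus in Hle. change (2 / M) with a.
  pose proof (Rmult_le_compat_l _ _ _ (Rlt_le _ _ H) R1). nra.
Qed.

(** * The function chi *)

Definition chi_slope (T y : R) : R := 2 * (exp (2 - y) * y ^ 2 / T) / (1 - exp (2 - y)).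
Definition chi_curv (T y : R) : R :=
  2 * (exp (2 - y) * y ^ 3 * (y - 2) / T ^ 2) / (1 - exp (2 - y))
  + 2 * (exp (2 - y) * y ^ 2 / T) ^ 2 / (1 - exp (2 - y)) ^ 2.

Lemma exp_2_le_9 : exp 2 <= 9.
Proof.
  replace 2 with (1 + 1) by ring. rewrite exp_plus.
  pose proof exp_le_3. pose proof (exp_pos 1). nra.
Qed.

(* Write e^(2-y) y^2 / T = A e^(-y), then use A^dl <= 1 + A and e^(-dl y) <= 4^4 / (dl y)^4. *)
Lemma chi_tail_bound dl T y : 0 < dl <= 1 -> T = 10240 / dl ^ 4 -> 1 <= y ->
  4 * y ^ 2 * Rpower (exp (2 - y) * y ^ 2 / T) dl <= T.
Proof.
  intros Hdl HT Hy.
  assert (HT1 : 1 <= T).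
  { rewrite HT. apply (Rle_div_r _ _ (dl ^ 4)); [apply pow_lt; lra|].
    assert (dl ^ 4 <= 1) by (rewrite <- (pow1 4); apply pow_incr; lra). lra. }
  assert (Hy2 : 1 <= y ^ 2) by (simpl; nra).
  set (A := exp 2 * y ^ 2 / T).
  assert (HA : 0 < A)
    by (apply Rdiv_lt_0_compat; [apply Rmult_lt_0_compat; [apply exp_pos|]|]; lra).
  assert (HA9 : A <= 9 * y ^ 2).
  { apply Rle_div_l; [lra|]. pose proof exp_2_le_9. nra. }
  assert (E : Rpower (exp (2 - y) * y ^ 2 / T) dl = Rpower A dl * exp (- (dl * y))).
  { replace (exp (2 - y) * y ^ 2 / T) with (A * exp (- y))
      by (unfold A, Rminus; rewrite exp_plus; field; lra).
    rewrite <- Rpower_mult_distr by (auto using exp_pos). unfold Rpower at 2.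
    rewrite ln_exp. f_equal. f_equal. ring. }
  pose proof (Rpower_le_1_plus A dl HA ltac:(lra)) as HAd.
  pose proof (exp_neg_le_inv_pow (dl * y) 4 ltac:(nra)) as Hexp.
  replace (INR 4 ^ 4) with 256 in Hexp by (simpl; ring).
  pose proof (exp_pos (- (dl * y))).
  rewrite E. apply Rle_trans with (4 * y ^ 2 * (10 * y ^ 2 * (256 / (dl * y) ^ 4))).
  - apply Rmult_le_compat_l; [nra|].
    apply Rle_trans with (10 * y ^ 2 * exp (- (dl * y))); [apply Rmult_le_compat_r; lra|].
    apply Rmult_le_compat_l; [nra | exact Hexp].
  - right. rewrite HT. field. lra.
Qed.

Section ChiEstimates.

Variables dl T y : R.
Hypothesis Hdl : 0 < dl <= 1.
Hypothesis HT : T = 10240 / dl ^ 4.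
Hypothesis Hy : 2 < y.

Let P := exp (2 - y).
Let X := P * y ^ 2 / T.
Let Y := P * y ^ 3 * (y - 2) / T ^ 2.

Lemma chi_T_pos : 0 < T.
Proof. rewrite HT. apply Rdiv_lt_0_compat; [lra | apply pow_lt; lra]. Qed.

Lemma chi_P_bounds : 0 < P < 1.
Proof. split; [apply exp_pos | rewrite <- exp_0; apply exp_increasing; lra]. Qed.

Lemma chi_X_pos : 0 < X.
Proof.
  pose proof chi_T_pos. pose proof chi_P_bounds.
  apply Rdiv_lt_0_compat; [apply Rmult_lt_0_compat; [|apply pow_lt]|]; lra.
Qed.

Lemma chi_Y_bounds : 0 <= Y <= X * y ^ 2 / T.
Proof.
  pose proof chi_T_pos. pose proof chi_P_bounds.
  assert (0 < P * y ^ 3) by (apply Rmult_lt_0_compat; [|apply pow_lt]; lra).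
  split.
  - apply Rdiv_le_0_compat; [apply Rmult_le_pos|apply pow_lt]; lra.
  - unfold Y, X. replace (P * y ^ 2 / T * y ^ 2 / T) with (P * y ^ 3 * y / T ^ 2) by (field; lra).
    unfold Rdiv. apply Rmult_le_compat_r; [left; apply Rinv_0_lt_compat, pow_lt; lra|].
    apply Rmult_le_compat_l; lra.
Qed.

Lemma chi_slope_pos : 0 < chi_slope T y.
Proof.
  pose proof chi_P_bounds. pose proof chi_X_pos. change (0 < 2 * X / (1 - P)).
  apply Rdiv_lt_0_compat; lra.
Qed.

Lemma chi_curv_nonneg : 0 <= chi_curv T y.
Proof.
  pose proof chi_P_bounds. pose proof chi_X_pos. pose proof chi_Y_bounds.
  change (0 <= 2 * Y / (1 - P) + 2 * X ^ 2 / (1 - P) ^ 2).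
  apply Rplus_le_le_0_compat; apply Rdiv_le_0_compat; try nra; apply pow_lt; lra.
Qed.

Lemma chi_Y_le_Rpower_X : 4 * Y <= Rpower X (1 - dl).
Proof.
  pose proof chi_T_pos. pose proof chi_X_pos as HX. pose proof chi_Y_bounds.
  pose proof (chi_tail_bound dl T y Hdl HT ltac:(lra)) as Htail. fold P X in Htail.
  assert (E : Rpower X (1 - dl) * Rpower X dl = X).
  { rewrite <- Rpower_plus. replace (1 - dl + dl) with 1 by ring. apply Rpower_1, HX. }
  pose proof (Rpower_pos X dl). pose proof (Rpower_pos X (1 - dl)).
  apply Rle_trans with (4 * (X * y ^ 2 / T)); [lra|].
  set (R1 := Rpower X (1 - dl)) in *. set (R2 := Rpower X dl) in *.
  replace (4 * (X * y ^ 2 / T)) with (R1 * (4 * y ^ 2 * R2) / T) by (rewrite <- E; field; lra).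
  apply (Rle_div_l _ _ T); [lra|]. apply Rmult_le_compat_l; lra.
Qed.

(* For P >= 1/2 the term 2 Y / (1 - P) is dominated by the square of the slope,
   for P < 1/2 by a power of it. *)
Lemma chi_curv_bound :
  chi_curv T y <= Rpower (chi_slope T y) (1 - dl) + chi_slope T y ^ 2.
Proof.
  pose proof chi_T_pos. pose proof chi_P_bounds as HP. pose proof chi_X_pos as HX.
  pose proof chi_Y_bounds as HY. pose proof chi_slope_pos as Hp.
  change (chi_slope T y) with (2 * X / (1 - P)) in *.
  change (chi_curv T y) with (2 * Y / (1 - P) + 2 * X ^ 2 / (1 - P) ^ 2).
  pose proof (Rpower_pos (2 * X / (1 - P)) (1 - dl)).
  assert (Hsq : (2 * X / (1 - P)) ^ 2 = 2 * (2 * X ^ 2 / (1 - P) ^ 2)) by (field; lra).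
  assert (0 <= 2 * X ^ 2 / (1 - P) ^ 2) by (apply Rdiv_le_0_compat; [nra | apply pow_lt; lra]).
  destruct (Rle_dec (/ 2) P) as [HP2|HP2].
  - assert (Y * (1 - P) <= X ^ 2).
    { assert (E : X ^ 2 = P * (X * y ^ 2 / T)) by (unfold X; field; lra).
      rewrite E. apply Rle_trans with (X * y ^ 2 / T * (1 - P)); [apply Rmult_le_compat_r; lra|].
      rewrite Rmult_comm. apply Rmult_le_compat_r; [|lra].
      apply Rdiv_le_0_compat; [pose proof (pow2_ge_0 y); nra | lra]. }
    assert (2 * Y / (1 - P) <= 2 * X ^ 2 / (1 - P) ^ 2).
    { apply (Rle_div_r _ _ ((1 - P) ^ 2)); [apply pow_lt; lra|].
      replace (2 * Y / (1 - P) * (1 - P) ^ 2) with (2 * (Y * (1 - P))) by (field; lra). lra. }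
    lra.
  - assert (S1 : 2 * Y / (1 - P) <= 4 * Y).
    { apply (Rle_div_l _ _ (1 - P)); [lra|]. destruct HP. destruct HY. nra. }
    assert (S2 : X <= 2 * X / (1 - P)).
    { apply (Rle_div_r _ _ (1 - P)); [lra|]. destruct HP. nra. }
    assert (S3 : Rpower X (1 - dl) <= Rpower (2 * X / (1 - P)) (1 - dl))
      by (apply Rle_Rpower_l; lra).
    pose proof chi_Y_le_Rpower_X. lra.
Qed.

End ChiEstimates.

Definition chi_fun (T s : R) : R := -2 * ln (1 - exp 2 * flat_exp T s).

Lemma chi_fun_arg_pos T s : 0 < T -> s < T / 2 -> 0 < 1 - exp 2 * flat_exp T s.
Proof.
  intros HT Hs. destruct (Rle_dec s 0) as [Hs0|Hs0].
  - rewrite flat_exp_nonpos by exact Hs0. lra.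
  - rewrite flat_exp_pos, <- exp_plus by lra.
    assert (2 < T / s) by (apply Rlt_div_r; lra).
    assert (exp (2 + - (T / s)) < exp 0) by (apply exp_increasing; lra).
    rewrite exp_0 in *. lra.
Qed.

Lemma chi_fun_nonpos T s : s <= 0 -> chi_fun T s = 0.
Proof.
  intros Hs. unfold chi_fun. rewrite flat_exp_nonpos, Rmult_0_r, Rminus_0_r, ln_1 by exact Hs.
  ring.
Qed.

Lemma chi_fun_smooth T : 0 < T -> smooth_on (chi_fun T) (fun s => s < T / 2).
Proof.
  intros HT. apply smooth_on_Ck. intros n. unfold chi_fun.
  apply Ck_on_mult; [apply open_lt | apply Ck_on_const|].
  apply (Ck_on_comp _ (open_lt _) n ln _ (fun x => 0 < x) (open_gt 0)).
  - intros s Hs. apply chi_fun_arg_pos; assumption.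
  - apply Ck_on_ln.
  - apply (Ck_on_subset n _ (fun _ => True)); [easy|].
    apply Ck_on_plus; [apply open_true | apply Ck_on_const|].
    apply Ck_on_opp, Ck_on_mult; [apply open_true | apply Ck_on_const | apply flat_exp_Ck, HT].
Qed.

Lemma chi_fun_derivatives T s : 0 < T -> 0 < s < T / 2 ->
  Derive (chi_fun T) s = chi_slope T (T / s) /\
  Derive_n (chi_fun T) 2 s = chi_curv T (T / s).
Proof.
  intros HT Hs.
  assert (Harg : forall x, 0 < x < T / 2 -> exp (2 + - (T * / x)) < 1).
  { intros x Hx. pose proof (chi_fun_arg_pos T x HT ltac:(lra)) as H.
    rewrite flat_exp_pos, <- exp_plus in H by lra. unfold Rdiv in H. lra. }
  apply (Derive_Derive_n_2_loc _ (fun x => -2 * ln (1 - exp (2 - T / x)))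
           (fun x => chi_slope T (T / x)) (fun x => chi_curv T (T / x))
           (fun x => 0 < x < T / 2)).
  - apply open_and; [apply open_gt | apply open_lt].
  - exact Hs.
  - intros x Hx. unfold chi_fun. rewrite flat_exp_pos, <- exp_plus by lra. reflexivity.
  - intros x Hx. specialize (Harg x Hx). unfold chi_slope.
    auto_derive; unfold Rminus, Rdiv in *; [repeat split; lra|]. field. lra.
  - intros x Hx. specialize (Harg x Hx). unfold chi_slope, chi_curv.
    auto_derive; unfold Rminus, Rdiv in *; [repeat split; lra|]. field. lra.
Qed.

Lemma chi_fun_lim T : 0 < T -> filterlim (chi_fun T) (at_left (T / 2)) (Rbar_locally p_infty).
Proof.
  intros HT P [M HM].
  (* chosen so that -2 ln eta = |M| + 2 > M *)
  set (eta := exp (- (Rabs M / 2) - 1)).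
  assert (Heta : 0 < eta) by apply exp_pos.
  assert (Hc : continuous (fun s => exp (2 - T / s)) (T / 2)).
  { apply (@ex_derive_continuous R_AbsRing R_NormedModule). auto_derive. lra. }
  assert (Hb : exp (2 - T / (T / 2)) = 1).
  { replace (2 - T / (T / 2)) with 0 by (field; lra). apply exp_0. }
  unfold continuous in Hc. rewrite Hb in Hc.
  assert (L1 := Hc (ball 1 (mkposreal eta Heta)) (locally_ball 1 (mkposreal eta Heta))).
  assert (L2 : locally (T / 2) (fun s => 0 < s))
    by (apply (locally_open _ _ (open_gt 0)); auto; lra).
  unfold filtermap, at_left, within. unfold filtermap in L1. simpl in L1.
  eapply filter_imp; [|exact (filter_and _ _ L1 L2)].
  intros s [Hs1 Hs2] Hsb. apply HM.
  change (Rabs (exp (2 - T / s) - 1) < eta) in Hs1. apply Rabs_def2 in Hs1.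
  pose proof (chi_fun_arg_pos T s HT Hsb) as Hpos.
  unfold chi_fun in *. rewrite flat_exp_pos, <- exp_plus in * by exact Hs2.
  unfold Rminus in *.
  assert (Hl : ln (1 + - exp (2 + - (T / s))) < ln eta) by (apply ln_increasing; lra).
  unfold eta in Hl. rewrite ln_exp in Hl. pose proof (Rle_abs M). lra.
Qed.

Lemma chi_fun_ineq m beta T s : (2 < m)%nat -> 0 < beta < 1 ->
  T = 10240 / (1 - gam m beta) ^ 4 -> 0 < s < T / 2 ->
  0 < Derive (chi_fun T) s /\ 0 <= Derive_n (chi_fun T) 2 s /\
  (INR m - 2) / INR m *
    rpow (Derive_n (chi_fun T) 2 s /
          rpow ((1 + Derive (chi_fun T) s) ^ m - (1 + Derive (chi_fun T) s)) (2 / INR m))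
         (INR m / (INR m - 2))
  <= rpow (Derive (chi_fun T) s) beta.
Proof.
  intros Hm Hb HT Hs. pose proof (gam_gap m beta Hm Hb) as Hdl.
  set (dl := 1 - gam m beta) in *.
  pose proof (chi_T_pos dl T Hdl HT) as HT0.
  assert (Hy : 2 < T / s) by (apply Rlt_div_r; lra).
  destruct (chi_fun_derivatives T s HT0 Hs) as [-> ->].
  pose proof (chi_slope_pos dl T (T / s) Hdl HT Hy) as Hp.
  pose proof (chi_curv_nonneg dl T (T / s) Hdl HT Hy) as Hq.
  split; [exact Hp | split; [exact Hq|]].
  apply chi_condition; try assumption.
  replace (gam m beta) with (1 - dl) by (unfold dl; ring).
  apply chi_curv_bound; assumption.
Qed.

(** * The function xi *)

Lemma exp_neg_ge_third y : y <= 1 -> / 3 <= exp (- y).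
Proof.
  intros Hy. rewrite exp_Ropp. apply Rinv_le_contravar; [apply exp_pos|].
  apply Rle_trans with (exp 1); [apply exp_le_compat, Hy | apply exp_le_3].
Qed.

(* With y = T / s one has xi s = s / xi_v y. *)
Definition xi_u (y : R) : R := 1 - exp (- y) / 2.
Definition xi_v (y : R) : R := 1 + exp (- y) / (2 * y).
Definition xi_slope (y : R) : R := xi_u y / xi_v y ^ 2.
Definition xi_curv (T y : R) : R :=
  - (exp (- y) / (2 * T)) * (y ^ 2 * xi_v y + 2 * xi_u y * (1 + y)) / xi_v y ^ 3.

Lemma xi_uv_bounds y : 0 < y -> / 2 <= xi_u y < 1 /\ 1 < xi_v y.
Proof.
  intros Hy. pose proof (exp_pos (- y)).
  assert (exp (- y) < 1) by (rewrite <- exp_0; apply exp_increasing; lra).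
  unfold xi_u, xi_v. split; [lra|].
  assert (0 < exp (- y) / (2 * y)) by (apply Rdiv_lt_0_compat; lra). lra.
Qed.

Lemma xi_slope_bounds y : 0 < y -> 0 < xi_slope y < 1.
Proof.
  intros Hy. destruct (xi_uv_bounds y Hy) as [Hu Hv]. unfold xi_slope.
  split; [apply Rdiv_lt_0_compat; [lra | apply pow_lt; lra]|].
  apply Rmult_lt_reg_r with (xi_v y ^ 2); [apply pow_lt; lra|].
  unfold Rdiv. rewrite Rmult_assoc, Rinv_l by (apply pow_nonzero; lra). simpl; nra.
Qed.

Lemma xi_curv_nonpos T y : 0 < T -> 0 < y -> xi_curv T y <= 0.
Proof.
  intros HT Hy. destruct (xi_uv_bounds y Hy) as [Hu Hv]. unfold xi_curv.
  pose proof (exp_pos (- y)). assert (0 < exp (- y) / (2 * T)) by (apply Rdiv_lt_0_compat; lra).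
  assert (0 < xi_v y ^ 3) by (apply pow_lt; lra).
  assert (0 < y ^ 2 * xi_v y + 2 * xi_u y * (1 + y)) by (simpl; nra).
  assert (0 < exp (- y) / (2 * T) * (y ^ 2 * xi_v y + 2 * xi_u y * (1 + y)) / xi_v y ^ 3)
    by (apply Rdiv_lt_0_compat; [apply Rmult_lt_0_compat|]; lra).
  unfold Rdiv in *. lra.
Qed.

Lemma xi_curv_le T y : 0 < T -> 0 < y ->
  - xi_curv T y <= exp (- y) / T * (y + 1) ^ 2 / xi_v y ^ 2.
Proof.
  intros HT Hy. destruct (xi_uv_bounds y Hy) as [Hu Hv]. unfold xi_curv.
  pose proof (exp_pos (- y)). set (e := exp (- y)) in *. set (v := xi_v y) in *.
  assert (0 < e / (2 * T)) by (apply Rdiv_lt_0_compat; lra).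
  assert (H2 : y ^ 2 * v + 2 * xi_u y * (1 + y) <= 2 * v * (y + 1) ^ 2) by (simpl; nra).
  replace (- (- (e / (2 * T)) * (y ^ 2 * v + 2 * xi_u y * (1 + y)) / v ^ 3))
    with (e / (2 * T) * (y ^ 2 * v + 2 * xi_u y * (1 + y)) / v ^ 3) by (field; lra).
  replace (e / T * (y + 1) ^ 2 / v ^ 2) with (e / (2 * T) * (2 * v * (y + 1) ^ 2) / v ^ 3)
    by (field; lra).
  unfold Rdiv at 2 4. apply Rmult_le_compat_r; [left; apply Rinv_0_lt_compat, pow_lt; lra|].
  apply Rmult_le_compat_l; lra.
Qed.

Lemma xi_slope_gap_small y : 0 < y <= 1 -> / 7 <= 1 - xi_slope y.
Proof.
  intros Hy. destruct (xi_uv_bounds y ltac:(lra)) as [Hu Hv].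
  assert (Hv7 : 7 / 6 <= xi_v y).
  { unfold xi_v. pose proof (exp_neg_ge_third y ltac:(lra)).
    assert (/ 6 <= exp (- y) / (2 * y)); [|lra].
    apply Rmult_le_reg_r with (2 * y); [lra|].
    unfold Rdiv. rewrite Rmult_assoc, Rinv_l; lra. }
  unfold xi_slope. assert (xi_u y / xi_v y ^ 2 <= 6 / 7); [|lra].
  apply Rmult_le_reg_r with (xi_v y ^ 2); [apply pow_lt; lra|].
  unfold Rdiv. rewrite Rmult_assoc, Rinv_l by (apply pow_nonzero; lra). simpl; nra.
Qed.

Lemma xi_slope_gap_large y : 1 < y -> 2 / 9 * exp (- y) <= 1 - xi_slope y.
Proof.
  intros Hy. destruct (xi_uv_bounds y ltac:(lra)) as [Hu Hv].
  pose proof (exp_pos (- y)).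
  assert (exp (- y) < 1) by (rewrite <- exp_0; apply exp_increasing; lra).
  assert (Hv3 : xi_v y <= 3 / 2).
  { unfold xi_v. assert (exp (- y) / (2 * y) <= / 2); [|lra].
    apply Rmult_le_reg_r with (2 * y); [lra|].
    unfold Rdiv. rewrite Rmult_assoc, Rinv_l; nra. }
  unfold xi_slope. replace (1 - xi_u y / xi_v y ^ 2) with ((xi_v y ^ 2 - xi_u y) / xi_v y ^ 2)
    by (field; lra).
  apply (Rle_div_r _ _ (xi_v y ^ 2)); [apply pow_lt; lra|].
  assert (xi_v y ^ 2 <= 9 / 4) by (simpl; nra).
  unfold xi_u in *. simpl in *; nra.
Qed.

Lemma xi_tail_bound dl T y : 0 < dl <= 1 -> T = 200 / dl ^ 2 -> 0 < y ->
  36 * y ^ 2 * exp (- (dl * y)) <= T.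
Proof.
  intros Hdl HT Hy. pose proof (exp_neg_le_inv_pow (dl * y) 2 ltac:(nra)) as H.
  replace (INR 2 ^ 2) with 4 in H by (simpl; ring).
  apply Rle_trans with (36 * y ^ 2 * (4 / (dl * y) ^ 2)).
  - apply Rmult_le_compat_l; [simpl; nra | exact H].
  - rewrite HT. replace (36 * y ^ 2 * (4 / (dl * y) ^ 2)) with (144 / dl ^ 2) by (field; lra).
    apply Rmult_le_compat_r; [left; apply Rinv_0_lt_compat, pow_lt|]; lra.
Qed.

Lemma xi_gap_bound_small dl T y : 0 < dl <= 1 -> 200 <= T -> 0 < y <= 1 ->
  2 * (exp (- y) / T * (y + 1) ^ 2) <= Rpower (1 - xi_slope y) (1 - dl).
Proof.
  intros Hdl HT Hy. pose proof (xi_slope_gap_small y Hy) as Hgap.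
  pose proof (xi_slope_bounds y ltac:(lra)) as Hr.
  pose proof (Rle_Rpower_base_le1 (1 - xi_slope y) (1 - dl) 1 ltac:(lra) ltac:(lra)) as Hpow.
  rewrite Rpower_1 in Hpow by lra.
  pose proof (exp_pos (- y)).
  assert (exp (- y) < 1) by (rewrite <- exp_0; apply exp_increasing; lra).
  assert (2 * (exp (- y) / T * (y + 1) ^ 2) <= 8 / T).
  { unfold Rdiv. assert (0 < / T) by (apply Rinv_0_lt_compat; lra).
    assert ((y + 1) ^ 2 <= 4) by (simpl; nra).
    assert (exp (- y) * (y + 1) ^ 2 <= 4) by (pose proof (pow2_ge_0 (y + 1)); nra).
    replace (2 * (exp (- y) * / T * (y + 1) ^ 2)) with (2 * (exp (- y) * (y + 1) ^ 2) * / T)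
      by ring.
    nra. }
  assert (8 / T <= / 7) by (apply Rle_div_l; lra). lra.
Qed.

(* Multiply by e^(-dl y): then e^(-y) (2/9)^(1-dl) remains on the right. *)
Lemma xi_gap_bound_large dl T y : 0 < dl <= 1 -> T = 200 / dl ^ 2 -> 1 < y ->
  2 * (exp (- y) / T * (y + 1) ^ 2) <= Rpower (1 - xi_slope y) (1 - dl).
Proof.
  intros Hdl HT Hy. pose proof (xi_slope_gap_large y Hy) as Hgap.
  assert (HT0 : 0 < T) by (rewrite HT; apply Rdiv_lt_0_compat; [lra | apply pow_lt; lra]).
  pose proof (exp_pos (- y)) as He. pose proof (exp_pos (- (dl * y))) as Hed.
  assert (E : Rpower (2 / 9 * exp (- y)) (1 - dl) * exp (- (dl * y))
              = Rpower (2 / 9) (1 - dl) * exp (- y)).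
  { rewrite <- Rpower_mult_distr by lra. unfold Rpower at 2. rewrite ln_exp.
    rewrite Rmult_assoc, <- exp_plus. f_equal. f_equal. ring. }
  assert (H1 : Rpower (2 / 9 * exp (- y)) (1 - dl) <= Rpower (1 - xi_slope y) (1 - dl)).
  { apply Rle_Rpower_l; [lra | split; [lra | exact Hgap]]. }
  pose proof (Rle_Rpower_base_le1 (2 / 9) (1 - dl) 1 ltac:(lra) ltac:(lra)) as H2.
  rewrite Rpower_1 in H2 by lra.
  pose proof (xi_tail_bound dl T y Hdl HT ltac:(lra)) as Htail.
  apply Rle_trans with (Rpower (2 / 9 * exp (- y)) (1 - dl)); [|exact H1].
  apply Rmult_le_reg_r with (exp (- (dl * y))); [exact Hed|]. rewrite E.
  apply Rle_trans with (2 / 9 * exp (- y)); [|apply Rmult_le_compat_r; lra].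
  assert ((y + 1) ^ 2 <= 4 * y ^ 2) by (simpl; nra).
  assert (Hpos : 0 < 2 * exp (- y) / T * exp (- (dl * y))).
  { apply Rmult_lt_0_compat; [apply Rdiv_lt_0_compat|]; lra. }
  apply Rle_trans with (2 * exp (- y) / T * exp (- (dl * y)) * (4 * y ^ 2)).
  { replace (2 * (exp (- y) / T * (y + 1) ^ 2) * exp (- (dl * y)))
      with (2 * exp (- y) / T * exp (- (dl * y)) * (y + 1) ^ 2) by (field; lra).
    apply Rmult_le_compat_l; lra. }
  replace (2 * exp (- y) / T * exp (- (dl * y)) * (4 * y ^ 2))
    with (2 / 9 * exp (- y) * (36 * y ^ 2 * exp (- (dl * y)) / T)) by (field; lra).
  rewrite <- (Rmult_1_r (2 / 9 * exp (- y))) at 2.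
  apply Rmult_le_compat_l; [lra|]. apply Rle_div_l; lra.
Qed.

Lemma xi_gap_bound dl T y : 0 < dl <= 1 -> T = 200 / dl ^ 2 -> 0 < y ->
  2 * (exp (- y) / T * (y + 1) ^ 2) <= Rpower (1 - xi_slope y) (1 - dl).
Proof.
  intros Hdl HT Hy. destruct (Rle_dec y 1) as [Hy1|Hy1].
  - apply xi_gap_bound_small; [exact Hdl | | lra].
    rewrite HT. apply (Rle_div_r _ _ (dl ^ 2)); [apply pow_lt; lra | simpl; nra].
  - apply (xi_gap_bound_large dl T y Hdl HT). lra.
Qed.

Lemma xi_curv_bound dl T y : 0 < dl <= 1 -> T = 200 / dl ^ 2 -> 0 < y ->
  - xi_curv T y <= xi_slope y * Rpower (1 - xi_slope y) (1 - dl).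
Proof.
  intros Hdl HT Hy.
  assert (HT0 : 0 < T) by (rewrite HT; apply Rdiv_lt_0_compat; [lra | apply pow_lt; lra]).
  destruct (xi_uv_bounds y Hy) as [Hu Hv].
  pose proof (xi_curv_le T y HT0 Hy) as H1.
  pose proof (xi_gap_bound dl T y Hdl HT Hy) as H2.
  assert (Hv2 : 0 < xi_v y ^ 2) by (apply pow_lt; lra).
  assert (Hr : / (2 * xi_v y ^ 2) <= xi_slope y).
  { unfold xi_slope. apply (Rle_div_r _ _ (xi_v y ^ 2)); [lra|].
    rewrite Rinv_mult, Rmult_assoc, Rinv_l by lra. lra. }
  apply Rle_trans with (exp (- y) / T * (y + 1) ^ 2 / xi_v y ^ 2); [exact H1|].
  pose proof (Rpower_pos (1 - xi_slope y) (1 - dl)).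
  apply Rle_trans with (/ (2 * xi_v y ^ 2) * Rpower (1 - xi_slope y) (1 - dl));
    [|apply Rmult_le_compat_r; lra].
  replace (exp (- y) / T * (y + 1) ^ 2 / xi_v y ^ 2)
    with (/ (2 * xi_v y ^ 2) * (2 * (exp (- y) / T * (y + 1) ^ 2))) by (field; lra).
  apply Rmult_le_compat_l; [left; apply Rinv_0_lt_compat; lra | exact H2].
Qed.

Definition xi_fun (T s : R) : R := s / (1 + s / (2 * T) * flat_exp T s).

Lemma xi_fun_den_pos T s : 0 < T -> 0 < 1 + s / (2 * T) * flat_exp T s.
Proof.
  intros HT. destruct (Rle_dec s 0) as [Hs|Hs].
  - rewrite flat_exp_nonpos by exact Hs. lra.
  - assert (0 < s / (2 * T)) by (apply Rdiv_lt_0_compat; lra).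
    pose proof (flat_exp_ge0 T s). nra.
Qed.

Lemma xi_fun_nonpos T s : s <= 0 -> xi_fun T s = s.
Proof.
  intros Hs. unfold xi_fun. rewrite flat_exp_nonpos, Rmult_0_r, Rplus_0_r by exact Hs.
  unfold Rdiv. rewrite Rinv_1. ring.
Qed.

Lemma xi_fun_pos T s : 0 < T -> 0 < s -> 0 < xi_fun T s.
Proof. intros HT Hs. apply Rdiv_lt_0_compat; [exact Hs | apply xi_fun_den_pos, HT]. Qed.

Lemma xi_fun_smooth T : 0 < T -> smooth_on (xi_fun T) (fun _ => True).
Proof.
  intros HT. apply smooth_on_Ck. intros n.
  apply Ck_on_mult; [apply open_true | apply Ck_on_id|].
  apply (Ck_on_comp _ open_true n Rinv _ (fun x => 0 < x) (open_gt 0)).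
  - intros s _. apply xi_fun_den_pos, HT.
  - apply Ck_on_inv.
  - apply Ck_on_plus; [apply open_true | apply Ck_on_const|].
    apply Ck_on_mult; [apply open_true | |apply flat_exp_Ck, HT].
    apply Ck_on_mult; [apply open_true | apply Ck_on_id | apply Ck_on_const].
Qed.

Lemma xi_fun_is_derive T s : 0 < T -> 0 < s -> is_derive (xi_fun T) s (xi_slope (T / s)).
Proof.
  intros HT Hs.
  apply (is_derive_ext_loc (fun x => x / (1 + x / (2 * T) * exp (- (T / x))))).
  - apply (locally_open _ _ (open_gt 0)); [|exact Hs].
    intros x Hx. unfold xi_fun. rewrite flat_exp_pos by exact Hx. reflexivity.
  - pose proof (exp_pos (- (T / s))). pose proof (xi_fun_den_pos T s HT) as Hden.
    rewrite flat_exp_pos in Hden by exact Hs. unfold Rdiv in *.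
    unfold xi_slope, xi_u, xi_v. auto_derive; [repeat split; lra|].
    replace (1 + exp (- (T * / s)) / (2 * (T * / s)))
      with (1 + s * / (2 * T) * exp (- (T * / s))) by (field; lra).
    assert (0 < s * exp (- (T * / s))) by (apply Rmult_lt_0_compat; lra).
    field. repeat split; lra.
Qed.

Lemma xi_fun_derivatives T s : 0 < T -> 0 < s ->
  Derive (xi_fun T) s = xi_slope (T / s) /\ Derive_n (xi_fun T) 2 s = xi_curv T (T / s).
Proof.
  intros HT Hs.
  apply (Derive_Derive_n_2_loc _ (xi_fun T) (fun x => xi_slope (T / x))
           (fun x => xi_curv T (T / x)) (fun x => 0 < x) _ (open_gt 0) Hs); [easy| |].
  - intros x Hx. apply xi_fun_is_derive; assumption.
  - intros x Hx. pose proof (exp_pos (- (T / x))).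
    assert (0 < x * exp (- (T / x))) by (apply Rmult_lt_0_compat; lra).
    assert (0 < T / x) by (apply Rdiv_lt_0_compat; lra).
    unfold xi_slope, xi_curv, xi_u, xi_v. unfold Rdiv in *.
    assert (HV : 1 + exp (- (T * / x)) * / (2 * (T * / x))
                 = (2 * T + x * exp (- (T * / x))) * / (2 * T)) by (field; lra).
    assert (0 < (2 * T + x * exp (- (T * / x))) * / (2 * T))
      by (apply Rmult_lt_0_compat; [|apply Rinv_0_lt_compat]; lra).
    auto_derive; rewrite HV.
    + repeat split; try lra. rewrite Rmult_1_r. apply Rgt_not_eq, Rmult_lt_0_compat; lra.
    + field. repeat split; lra.
Qed.

Lemma xi_fun_increasing T : 0 < T -> forall x y, x < y -> xi_fun T x < xi_fun T y.
Proof.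
  intros HT x y Hxy. destruct (Rle_dec y 0) as [Hy|Hy].
  - rewrite !xi_fun_nonpos by lra. exact Hxy.
  - destruct (Rle_dec x 0) as [Hx|Hx].
    + rewrite xi_fun_nonpos by exact Hx. pose proof (xi_fun_pos T y HT ltac:(lra)). lra.
    + apply (incr_function (xi_fun T) 0 p_infty (fun s => xi_slope (T / s))); simpl; try lra.
      * intros s Hs _. apply xi_fun_is_derive; assumption.
      * intros s Hs _. apply xi_slope_bounds, Rdiv_lt_0_compat; lra.
Qed.

Lemma xi_fun_lim T : 0 < T -> is_lim (xi_fun T) p_infty (2 * T).
Proof.
  intros HT. set (c := / (2 * T)).
  assert (Hc : 0 < c) by (apply Rinv_0_lt_compat; lra).
  assert (L1 : is_lim (fun s => / s) p_infty 0).
  { apply (is_lim_inv (fun s => s) p_infty p_infty); [apply is_lim_id | discriminate]. }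
  assert (L2 : is_lim (fun s => - (T * / s)) p_infty 0).
  { pose proof (is_lim_opp _ _ _ (is_lim_scal_l _ T _ _ L1)) as H. simpl in H.
    rewrite Rmult_0_r, Ropp_0 in H. exact H. }
  assert (L3 : is_lim (fun s => exp (- (T * / s))) p_infty 1).
  { rewrite <- exp_0. apply (is_lim_comp_continuous (fun s => - (T * / s)) exp p_infty 0 L2).
    apply (@ex_derive_continuous R_AbsRing R_NormedModule). auto_derive. easy. }
  assert (L4 : is_lim (fun s => / s + c * exp (- (T * / s))) p_infty c).
  { pose proof (is_lim_plus' _ _ p_infty 0 (c * 1) L1 (is_lim_scal_l _ c p_infty 1 L3)) as H.
    rewrite Rplus_0_l, Rmult_1_r in H. exact H. }
  apply (is_lim_ext_loc (fun s => / (/ s + c * exp (- (T * / s))))).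
  - exists 0. intros s Hs. unfold xi_fun. rewrite flat_exp_pos by exact Hs. unfold c.
    pose proof (exp_pos (- (T / s))). unfold Rdiv in *.
    assert (0 < s * exp (- (T * / s))) by (apply Rmult_lt_0_compat; lra).
    field. repeat split; lra.
  - replace (2 * T) with (/ c) by (unfold c; field; lra).
    apply (is_lim_inv _ p_infty c L4). intros E. injection E. lra.
Qed.

Lemma xi_fun_ineq m beta T s : (2 < m)%nat -> 0 < beta < 1 ->
  T = 200 / (1 - gam m beta) ^ 2 -> 0 < s ->
  0 < Derive (xi_fun T) s < 1 /\ Derive_n (xi_fun T) 2 s <= 0 /\
  (INR m - 2) / INR m *
    rpow (- Derive_n (xi_fun T) 2 s /
          rpow (Derive (xi_fun T) s - (Derive (xi_fun T) s) ^ m) (2 / INR m))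
         (INR m / (INR m - 2))
  <= rpow (1 - Derive (xi_fun T) s) beta.
Proof.
  intros Hm Hb HT Hs. pose proof (gam_gap m beta Hm Hb) as Hdl.
  set (dl := 1 - gam m beta) in *.
  assert (HT0 : 0 < T) by (rewrite HT; apply Rdiv_lt_0_compat; [lra | apply pow_lt; lra]).
  assert (Hy : 0 < T / s) by (apply Rdiv_lt_0_compat; lra).
  destruct (xi_fun_derivatives T s HT0 Hs) as [-> ->].
  pose proof (xi_slope_bounds (T / s) Hy) as Hr.
  pose proof (xi_curv_nonpos T (T / s) HT0 Hy) as Hc.
  split; [exact Hr | split; [exact Hc|]].
  apply xi_condition; try assumption.
  replace (gam m beta) with (1 - dl) by (unfold dl; ring).
  apply xi_curv_bound; assumption.
Qed.

Theorem proposition3p6 (m : nat) (beta : R) :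
  (2 < m)%nat -> 0 < beta < 1 ->
  (* (a) *)
  (exists (b : R) (chi : R -> R),
      0 < b /\
      smooth_on chi (fun s => s < b) /\
      (forall s, s <= 0 -> chi s = 0) /\
      filterlim chi (at_left b) (Rbar_locally p_infty) /\
      (forall s, 0 < s < b ->
         0 < Derive chi s /\ 0 <= Derive_n chi 2 s /\
         (INR m - 2) / INR m *
           rpow (Derive_n chi 2 s /
                 rpow ((1 + Derive chi s) ^ m - (1 + Derive chi s)) (2 / INR m))
                (INR m / (INR m - 2))
         <= rpow (Derive chi s) beta)) /\
  (* (b) *)
  (exists xi : R -> R,
      smooth_on xi (fun _ => True) /\
      (forall s, s <= 0 -> xi s = s) /\
      (exists M : R, 0 < M /\
         (forall x y, x < y -> xi x < xi y) /\
         is_lim xi p_infty M) /\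
      (forall s, 0 < s ->
         0 < Derive xi s < 1 /\ Derive_n xi 2 s <= 0 /\
         (INR m - 2) / INR m *
           rpow (- Derive_n xi 2 s /
                 rpow (Derive xi s - (Derive xi s) ^ m) (2 / INR m))
                (INR m / (INR m - 2))
         <= rpow (1 - Derive xi s) beta)).
Proof.
  intros Hm Hb. pose proof (gam_gap m beta Hm Hb) as Hdl.
  split.
  - set (T := 10240 / (1 - gam m beta) ^ 4).
    assert (HT : 0 < T) by (apply Rdiv_lt_0_compat; [lra | apply pow_lt; lra]).
    exists (T / 2), (chi_fun T).
    split; [lra|]. split; [apply chi_fun_smooth, HT|].
    split; [exact (chi_fun_nonpos T)|]. split; [apply chi_fun_lim, HT|].
    intros s Hs. apply chi_fun_ineq; auto.
  - set (T := 200 / (1 - gam m beta) ^ 2).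
    assert (HT : 0 < T) by (apply Rdiv_lt_0_compat; [lra | apply pow_lt; lra]).
    exists (xi_fun T).
    split; [apply xi_fun_smooth, HT|]. split; [exact (xi_fun_nonpos T)|].
    split.
    + exists (2 * T). split; [lra|].
      split; [exact (xi_fun_increasing T HT) | apply xi_fun_lim, HT].
    + intros s Hs. apply xi_fun_ineq; auto.
Qed.
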